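(* Let $\mathbf A$ be regular of bandwidth $(p,q)$, $\sigma=d\tau-\dim\ker\mathbf A$, $L\le R$ finite with $N=R-L+1\ge\tau+2\sigma$, $\overline L=L+\sigma-1$, $\overline R=R-\sigma+1$. Define the square matrices $$K^-=\mathbf P_{L-p',\overline L-p'}\mathbf A|_{\mathcal V_{L,\overline L}},\qquad K^+=\mathbf P_{\overline R-q',R-q'}\mathbf A|_{\mathcal V_{\overline R,R}}.$$ Then $\mathcal F_L^-=\ker K^-$ and $\mathcal F_R^+=\ker K^+$.
   Context: Fix $d\ge1$. $\mathcal V^S_d$: doubly infinite sequences $\Psi=\{\psi_j\}_{j\in\mathbb Z}$, $\psi_j\in\mathbb C^d$. A matrix Laurent polynomial of bandwidth $(p,q)$ is $\sum_{r=p}^qa_rw^r$, integers $p\le q$, $a_r$ complex $d\times d$, $a_p\ne0\ne a_q$; its BBL transformation is $(\mathbf A\Psi)_j=\sum_ra_r\psi_{j+r}$; $\mathbf T$ is the left shift $(\mathbf T\Psi)_j=\psi_{j+1}$, $\mathbf T^{-1}$ the right shift. $\mathbf A$ is regular if $\det(w^{-p}A(w,w^{-1}))$ is not the zero polynomial (then $\ker\mathbf A$ is finite-dimensional). $p'=\min(p,0)$, $q'=\max(0,q)$, $\tau=q'-p'$. For $-\infty\le L\le R\le\infty$: $\mathcal V_{L,R}$ = sequences with $\psi_j=0$ for $j\notin[L,R]$; $\mathbf P_{L,R}$ = projection onto $\mathcal V_{L,R}$ zeroing entries outside $[L,R]$; bulk solution space $\mathcal M_{L,R}=\ker(\mathbf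 P_{L-p',R-q'}\mathbf A|_{\mathcal V_{L,R}})$ (infinite endpoints stay infinite). Define $\mathcal F_L^-=\{\Psi\in\mathcal M_{L,\infty}: (\mathbf P_{L,\infty}\mathbf T)^k\Psi=0\text{ for some }k\ge1\}$ and $\mathcal F_R^+=\{\Psi\in\mathcal M_{-\infty,R}: (\mathbf P_{-\infty,R}\mathbf T^{-1})^k\Psi=0\text{ for some }k\ge1\}$. $K^\pm$ are viewed as linear maps $\mathcal V_{L,\overline L}\to\mathcal V_{L-p',\overline L-p'}$ and $\mathcal V_{\overline R,R}\to\mathcal V_{\overline R-q',R-q'}$ (both spaces of dimension $d\sigma$). *)

From HB Require Import structures.
From mathcomp Require Import all_boot all_order all_algebra.
Set Implicit Arguments. Unset Strict Implicit. Unset Printing Implicit Defensive.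
Import Order.TTheory GRing.Theory Num.Theory.
Local Open Scope ring_scope.

Section BBL.
Variables (C : numClosedFieldType) (d : nat).

Definition seqZ := int -> 'cV[C]_d.

(* BBL transformation of the matrix Laurent polynomial sum_{r=p}^q a_r w^r *)
Definition bbl (a : int -> 'M[C]_d) (p q : int) (Psi : seqZ) : seqZ :=
  fun j => \sum_(k < `|q - p|%N.+1) a (p + k%:Z) *m Psi (j + (p + k%:Z)).

Definition bandwidth (a : int -> 'M[C]_d) (p q : int) : Prop :=
  [/\ p <= q, a p != 0, a q != 0 & forall r, (r < p) || (q < r) -> a r = 0].

(* regular: det (w^{-p} A(w)) is not the zero polynomial *)
Definition regular (a : int -> 'M[C]_d) (p q : int) : Prop :=
  \det (\matrix_(i, j) \poly_(k < `|q - p|%N.+1) (a (p + k%:Z) i j))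
    != 0 :> {poly C}.

Definition shiftT (Psi : seqZ) : seqZ := fun j => Psi (j + 1).
Definition shiftTinv (Psi : seqZ) : seqZ := fun j => Psi (j - 1).

(* extended bounds: None = -oo for a lower bound, +oo for an upper bound *)
Definition in_range (lo hi : option int) (j : int) : bool :=
  (if lo is Some l then l <= j else true) && (if hi is Some h then j <= h else true).

Definition ext_add (b : option int) (c : int) : option int :=
  if b is Some x then Some (x + c) else None.

Definition inV (lo hi : option int) (Psi : seqZ) : Prop :=
  forall j, ~~ in_range lo hi j -> Psi j = 0.

Definition proj (lo hi : option int) (Psi : seqZ) : seqZ :=
  fun j => if in_range lo hi j then Psi j else 0.

Definition is_zero (Psi : seqZ) : Prop := forall j, Psi j = 0.

Definition pmin (p : int) : int := Num.min p 0.
Definition qmax (q : int) : int := Num.max 0 q.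
Definition tau (p q : int) : int := qmax q - pmin p.

(* bulk solution space M_{L,R} = ker (P_{L-p',R-q'} A |_{V_{L,R}}) *)
Definition bulkM (a : int -> 'M[C]_d) (p q : int) (lo hi : option int)
  (Psi : seqZ) : Prop :=
  inV lo hi Psi /\
  is_zero (proj (ext_add lo (- pmin p)) (ext_add hi (- qmax q)) (bbl a p q Psi)).

Definition Fminus (a : int -> 'M[C]_d) (p q L : int) (Psi : seqZ) : Prop :=
  bulkM a p q (Some L) None Psi /\
  exists k : nat, (1 <= k)%N /\
    is_zero (iter k (fun Phi => proj (Some L) None (shiftT Phi)) Psi).

Definition Fplus (a : int -> 'M[C]_d) (p q R : int) (Psi : seqZ) : Prop :=
  bulkM a p q None (Some R) Psi /\
  exists k : nat, (1 <= k)%N /\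
    is_zero (iter k (fun Phi => proj None (Some R) (shiftTinv Phi)) Psi).

Definition kerA (a : int -> 'M[C]_d) (p q : int) (Psi : seqZ) : Prop :=
  is_zero (bbl a p q Psi).

Definition has_dim (S : seqZ -> Prop) (n : nat) : Prop :=
  exists b : 'I_n -> seqZ,
    [/\ forall i, S (b i),
        (forall c : 'I_n -> C, (forall j, \sum_i c i *: b i j = 0) ->
            forall i, c i = 0)
      & forall Psi, S Psi ->
          exists c : 'I_n -> C, forall j, Psi j = \sum_i c i *: b i j].

Definition Kminus (a : int -> 'M[C]_d) (p q L Lbar : int) (Psi : seqZ) : seqZ :=
  proj (Some (L - pmin p)) (Some (Lbar - pmin p)) (bbl a p q Psi).
Definition kerKminus (a : int -> 'M[C]_d) (p q L Lbar : int) (Psi : seqZ) : Prop :=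
  inV (Some L) (Some Lbar) Psi /\ is_zero (Kminus a p q L Lbar Psi).

Definition Kplus (a : int -> 'M[C]_d) (p q Rbar R : int) (Psi : seqZ) : seqZ :=
  proj (Some (Rbar - qmax q)) (Some (R - qmax q)) (bbl a p q Psi).
Definition kerKplus (a : int -> 'M[C]_d) (p q Rbar R : int) (Psi : seqZ) : Prop :=
  inV (Some Rbar) (Some R) Psi /\ is_zero (Kplus a p q Rbar R Psi).

End BBL.

(* Write B(w) = w^-p A(w): a polynomial matrix acting on sequences with 'X as the left
   shift, so that (A Psi)_j = (B Psi)_(j+p).  Multiplying by the adjugate turns the bulk
   equations into the scalar recurrence det B(T) Psi = 0, which propagates zeros:  an
   element of F_L^- vanishes from L - p' + p + s on, where w^s is the largest power of w
   dividing det B, and an element of F_R^+ vanishes up to R - q' + p - (d-1)(q-p) + deg det B.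
   Conversely, factoring a root of det B out of B loses at most one dimension of the kernel,
   and none for the root 0; hence dim ker A <= deg det B - s.  Together these bounds put the
   supports inside [L, Lbar] and [Rbar, R], where the equations of K^- and K^+ are exactly
   the bulk equations. *)

From HB Require Import structures.
From mathcomp Require Import all_boot all_order all_algebra.
From mathcomp Require Import perm zify.
Set Implicit Arguments. Unset Strict Implicit. Unset Printing Implicit Defensive.
Import Order.TTheory GRing.Theory Num.Theory.
Local Open Scope ring_scope.

Section PolyMatrixAction.
Variables (C : numClosedFieldType) (d : nat).
Local Notation pmx := 'M[{poly C}]_d.
Local Notation sq := (seqZ C d).

Definition coefmx (P : pmx) k : 'M[C]_d := \matrix_(i, l) (P i l)`_k.

Definition pmx_actn N (P : pmx) (psi : sq) : sq :=
  fun j => \sum_(k < N) coefmx P k *m psi (j + k%:Z).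

Definition msize (P : pmx) : nat := (\max_(il : 'I_d * 'I_d) size (P il.1 il.2))%N.

(* [msize P] bounds the sizes of the entries, so the truncated sum is the whole action. *)
Definition pmx_act (P : pmx) := pmx_actn (msize P) P.

Definition pmx_ker (P : pmx) (psi : sq) : Prop := forall j, pmx_act P psi j = 0.

Lemma size_msize (P : pmx) i l : (size (P i l) <= msize P)%N.
Proof. exact: (@leq_bigmax _ (fun il : 'I_d * 'I_d => size (P il.1 il.2)) (i, l)). Qed.

Lemma coefmx_size (P : pmx) k : (forall i l, size (P i l) <= k)%N -> coefmx P k = 0.
Proof. by move=> hP; apply/matrixP => i l; rewrite !mxE nth_default. Qed.

Lemma pmx_actn_widen N M (P : pmx) psi j : (forall i l, size (P i l) <= N)%N ->
  (N <= M)%N -> pmx_actn M P psi j = pmx_actn N P psi j.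
Proof.
move=> hP hNM; rewrite /pmx_actn (big_ord_widen M (fun k => coefmx P k *m psi (j + k%:Z)) hNM).
rewrite [RHS]big_mkcond /=; apply: eq_bigr => k _.
case: ltnP => // hk; rewrite coefmx_size ?mul0mx // => i l; exact: leq_trans (hP i l) hk.
Qed.

Lemma pmx_actnE N (P : pmx) psi j : (forall i l, size (P i l) <= N)%N ->
  pmx_actn N P psi j = pmx_act P psi j.
Proof.
move=> hP; rewrite /pmx_act -(@pmx_actn_widen N (maxn N (msize P))) ?leq_maxl //.
by rewrite (@pmx_actn_widen (msize P)) ?leq_maxr // => i l; apply: size_msize.
Qed.

Lemma coefmx_sum I (r : seq I) (F : I -> pmx) k :
  coefmx (\sum_(i <- r) F i) k = \sum_(i <- r) coefmx (F i) k.
Proof.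
apply/matrixP => i l; rewrite mxE !summxE coef_sum.
by apply: eq_bigr => x _; rewrite !mxE.
Qed.

Lemma pmx_actn_sum N I (r : seq I) (F : I -> pmx) psi j :
  pmx_actn N (\sum_(i <- r) F i) psi j = \sum_(i <- r) pmx_actn N (F i) psi j.
Proof.
rewrite /pmx_actn exchange_big /=; apply: eq_bigr => k _.
by rewrite coefmx_sum mulmx_suml.
Qed.

Lemma pmx_actn_ext N (P : pmx) (x y : sq) j :
  x =1 y -> pmx_actn N P x j = pmx_actn N P y j.
Proof. by move=> h; apply: eq_bigr => k _; rewrite h. Qed.

Lemma pmx_actn0 N (P : pmx) j : pmx_actn N P (fun=> 0) j = 0.
Proof. by rewrite /pmx_actn big1 // => k _; rewrite mulmx0. Qed.

Lemma pmx_actnB N (P : pmx) (x y : sq) c j :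
  pmx_actn N P (fun j => x j - c *: y j) j = pmx_actn N P x j - c *: pmx_actn N P y j.
Proof.
rewrite /pmx_actn scaler_sumr -sumrB; apply: eq_bigr => k _.
by rewrite mulmxBr scalemxAr.
Qed.

Lemma pmx_kerB (P : pmx) (x y : sq) c :
  pmx_ker P x -> pmx_ker P y -> pmx_ker P (fun j => x j - c *: y j).
Proof. by move=> hx hy j; rewrite /pmx_act pmx_actnB -!/(pmx_act _ _ _) hx hy scaler0 subr0. Qed.

Definition monomx (M : 'M[C]_d) (k : nat) : pmx := \matrix_(i, l) (M i l *: 'X^k).

Lemma coefmx_monomx M m k : coefmx (monomx M m) k = if k == m then M else 0.
Proof.
apply/matrixP => i l; rewrite !mxE coefZ coefXn.
by case: eqP => _; rewrite ?mulr1 ?mulr0 ?mxE.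
Qed.

Lemma pmx_actn_monomx N M m psi j : (m < N)%N ->
  pmx_actn N (monomx M m) psi j = M *m psi (j + m%:Z).
Proof.
move=> hm; rewrite /pmx_actn (bigD1 (Ordinal hm)) //= coefmx_monomx eqxx big1 ?addr0 //.
move=> k hk; rewrite coefmx_monomx; case: eqP => [e|_]; last by rewrite mul0mx.
by case/eqP: hk; apply/val_inj.
Qed.

Lemma monomx_decomp N (P : pmx) : (forall i l, size (P i l) <= N)%N ->
  P = \sum_(k < N) monomx (coefmx P k) k.
Proof.
move=> hP; apply/matrixP => i l; rewrite summxE.
rewrite (eq_bigr (fun k : 'I_N => (P i l)`_k *: 'X^k)); last by move=> k _; rewrite !mxE.
rewrite -(@poly_def _ N (fun k => (P i l)`_k)); apply/polyP => k; rewrite coef_poly.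
by case: ltnP => hk //; rewrite nth_default // (leq_trans (hP i l) hk).
Qed.

Lemma mulmx_monomx M M' m m' : monomx M m *m monomx M' m' = monomx (M *m M') (m + m').
Proof.
apply/matrixP => i l; rewrite !mxE scaler_suml; apply: eq_bigr => b _.
by rewrite !mxE exprD -scalerAl -scalerAr scalerA.
Qed.

Lemma size_mulmx_leq (P Q : pmx) N1 N2 i l : (forall i l, size (P i l) <= N1)%N ->
  (forall i l, size (Q i l) <= N2)%N -> (size ((P *m Q) i l) <= N1 + N2)%N.
Proof.
move=> hP hQ; rewrite mxE; apply: leq_trans (size_sum _ _ _) _.
apply/bigmax_leqP => b _; apply: leq_trans (size_polyMleq _ _) _.
exact: leq_trans (leq_pred _) (leq_add (hP _ _) (hQ _ _)).
Qed.

Lemma pmx_act_mul (P Q : pmx) psi j :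
  pmx_act (P *m Q) psi j = pmx_act P (pmx_act Q psi) j.
Proof.
set N1 := msize P; set N2 := msize Q.
rewrite -(@pmx_actnE (N1 + N2)); last by move=> i l; apply: size_mulmx_leq => *; apply: size_msize.
have -> : P *m Q = \sum_(k < N1) (monomx (coefmx P k) k *m \sum_(k' < N2) monomx (coefmx Q k') k').
  by rewrite -mulmx_suml -!monomx_decomp // => i l; apply: size_msize.
rewrite pmx_actn_sum [RHS]/pmx_act [RHS]/pmx_actn; apply: eq_bigr => k _.
rewrite mulmx_sumr pmx_actn_sum [X in _ = _ *m X]/pmx_act [X in _ = _ *m X]/pmx_actn.
rewrite mulmx_sumr; apply: eq_bigr => k' _.
rewrite mulmx_monomx pmx_actn_monomx; last by have := ltn_ord k; have := ltn_ord k'; lia.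
by rewrite mulmxA PoszD addrA.
Qed.

Definition seq_free n (b : 'I_n -> sq) :=
  forall c : 'I_n -> C, (forall j, \sum_i c i *: b i j = 0) -> forall i, c i = 0.

(* Subtract from the [b i] a suitable multiple of one [b i0] with [ell (b i0) != 0]. *)
Lemma seq_free_hyperplane n (b : 'I_n.+1 -> sq) (S : sq -> Prop) (ell : sq -> C) :
  seq_free b -> (forall i, S (b i)) ->
  (forall x y c, S x -> S y -> S (fun j => x j - c *: y j)) ->
  (forall x y c, ell (fun j => x j - c *: y j) = ell x - c * ell y) ->
  exists b' : 'I_n -> sq, seq_free b' /\ forall k, S (b' k) /\ ell (b' k) = 0.
Proof.
move=> hfree hS hSB hlin.
pose i0 := odflt ord_max [pick i | ell (b i) != 0].
pose t (k : 'I_n) := if ell (b i0) == 0 then 0 else ell (b (lift i0 k)) / ell (b i0).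
exists (fun k j => b (lift i0 k) j - t k *: b i0 j); split; last first.
  move=> k; split; first exact: hSB.
  rewrite hlin /t; case: eqP => [e|/eqP ne]; last by rewrite divfK ?subrr.
  rewrite mul0r subr0; move: e; rewrite /i0; case: pickP => [i hi /= e|h _].
    by move: hi; rewrite e eqxx.
  by have /negbFE/eqP := h (lift ord_max k).
move=> c hc.
pose c' (i : 'I_n.+1) := if unlift i0 i is Some k then c k else - \sum_k c k * t k.
have hc' : forall j, \sum_i c' i *: b i j = 0.
  move=> j; apply: etrans (hc j); rewrite (bigD1_ord i0) //= /c' unlift_none.
  under eq_bigr do rewrite liftK.
  under [RHS]eq_bigr do rewrite scalerBr scalerA.
  by rewrite sumrB -scaler_suml scaleNr addrC.
by move=> k; have := hfree c' hc' (lift i0 k); rewrite /c' liftK.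
Qed.

Lemma pmx_act_scalar (P : {poly C}) (psi : sq) j :
  pmx_act (P%:M : pmx) psi j = \sum_(k < size P) P`_k *: psi (j + k%:Z).
Proof.
rewrite -(@pmx_actnE (size P)); last first.
  by move=> i l; rewrite mxE; case: (i == l); rewrite /= ?mulr1n ?mulr0n ?size_poly0.
apply: eq_bigr => k _; rewrite -mul_scalar_mx; congr (_ *m _).
by apply/matrixP => i l; rewrite !mxE; case: (i == l); rewrite /= ?mulr1n ?mulr0n ?coef0.
Qed.

Lemma pmx_ker_det_unit (B : pmx) c psi :
  \det B = c%:P -> c != 0 -> pmx_ker B psi -> psi =1 fun=> 0.
Proof.
move=> hdet hc hker j; have := pmx_act_mul (\adj B) B psi j.
rewrite mul_adj_mx hdet pmx_act_scalar size_polyC hc big_ord1 coefC addr0.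
rewrite /pmx_act (@pmx_actn_ext _ _ _ (fun=> 0)) // pmx_actn0.
by move/eqP; rewrite scaler_eq0 (negbTE hc) => /eqP.
Qed.

Lemma geometric_eq0 (x : int -> C) lam :
  (forall j, x (j + 1) = lam * x j) -> x 0 = 0 -> forall j, x j = 0.
Proof.
move=> hx h0.
have key m : x m%:Z = 0 /\ x (- m%:Z) = 0.
  elim: m => [|m [h1 h2]]; first by rewrite oppr0.
  split; first by rewrite -addn1 PoszD hx h1 mulr0.
  have e : x (- m%:Z) = lam * x (- m.+1%:Z).
    by rewrite -hx; congr x; rewrite -addn1 PoszD opprD addrNK.
  have [lz|lne] := eqVneq lam 0; first by rewrite -[- _](addrNK 1) hx lz mul0r.
  by move: h2; rewrite e => /eqP; rewrite mulf_eq0 (negbTE lne) => /eqP.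
by case=> m; [case: (key m) | rewrite NegzE; case: (key m.+1)].
Qed.

Definition diagX (i0 : 'I_d) (lam : C) : pmx :=
  \matrix_(i, l) if i == l then (if i == i0 then 'X - lam%:P else 1) else 0.

Lemma det_diagX i0 lam : \det (diagX i0 lam) = 'X - lam%:P.
Proof.
rewrite det_trig; last first.
  by apply/is_trig_mxP => i l hil; rewrite mxE; case: eqP hil => // ->; rewrite ltnn.
rewrite (bigD1 i0) //= mxE !eqxx big1 ?mulr1 // => i /negbTE hi.
by rewrite mxE eqxx hi.
Qed.

Lemma pmx_act_diagX i0 lam (phi : sq) j i : pmx_act (diagX i0 lam) phi j i 0 =
  if i == i0 then phi (j + 1) i 0 - lam * phi j i 0 else phi j i 0.
Proof.
rewrite -(@pmx_actnE 2); last first.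
  move=> k l; rewrite mxE; case: eqP => _; rewrite ?size_poly0 //.
  by case: eqP => _; rewrite ?size_XsubC ?size_poly1.
rewrite summxE !big_ord_recr big_ord0 /= add0r addr0 !mxE.
rewrite (bigD1 i) //= (bigD1 i (P := predT)) //= !mxE !eqxx.
rewrite !big1 ?addr0 => [| l /negbTE hl | l /negbTE hl]; last 2 first.
- by rewrite !mxE eq_sym hl coef0 mul0r.
- by rewrite !mxE eq_sym hl coef0 mul0r.
case: eqP => _; last by rewrite coefC coefC mul1r mul0r addr0.
by rewrite !coefB !coefX !coefC /= sub0r subr0 mul1r mulNr addrC.
Qed.

Lemma pmx_ker_diagX i0 lam (phi : sq) : pmx_ker (diagX i0 lam) phi ->
  (forall j i, i != i0 -> phi j i 0 = 0) /\
  (forall j, phi (j + 1) i0 0 = lam * phi j i0 0).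
Proof.
move=> hker; split => [j i /negbTE hi | j].
  by have := pmx_act_diagX i0 lam phi j i; rewrite hi hker mxE.
have := pmx_act_diagX i0 lam phi j i0; rewrite eqxx hker mxE.
by move/eqP; rewrite eq_sym subr_eq0 => /eqP.
Qed.

Lemma geometric_pmx_ker (P : pmx) psi (i0 : 'I_d) lam :
  (forall j i, i != i0 -> pmx_act P psi j i 0 = 0) ->
  (forall j, pmx_act P psi (j + 1) i0 0 = lam * pmx_act P psi j i0 0) ->
  pmx_act P psi 0 i0 0 = 0 -> pmx_ker P psi.
Proof.
move=> hi hgeo h0 j; apply/matrixP => i k; rewrite ord1 mxE.
have [->|ne] := eqVneq i i0; last exact: hi.
exact: (geometric_eq0 (x := fun j => pmx_act P psi j i0 0) hgeo).
Qed.

Definition row_replace (i0 : 'I_d) (v : 'rV[C]_d) : pmx :=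
  \matrix_(i, l) if i == i0 then (v 0 l)%:P else (i == l)%:R.

Lemma det_row_replace (i0 : 'I_d) (v : 'rV[C]_d) : (forall l, v 0 l != 0 -> (l <= i0)%N) ->
  \det (row_replace i0 v) = (v 0 i0)%:P.
Proof.
move=> hlast; rewrite det_trig; last first.
  apply/is_trig_mxP => i l hil; rewrite mxE; case: eqP => [ei|_].
    apply/eqP; rewrite polyC_eq0; apply: contraTT hil => /hlast.
    by rewrite -ei -leqNgt.
  by case: eqP hil => // ->; rewrite ltnn.
rewrite (bigD1 i0) //= mxE eqxx big1 ?mulr1 // => i /negbTE hi.
by rewrite mxE hi eqxx.
Qed.

(* Row [i0] of [row_replace i0 v *m B] is [v *m B], which vanishes at [lam] and is
   therefore divisible by ['X - lam]. *)
Lemma row_replace_factor (B : pmx) lam (i0 : 'I_d) (v : 'rV[C]_d) :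
  v *m map_mx (horner_eval lam) B = 0 ->
  exists B' : pmx, diagX i0 lam *m B' = row_replace i0 v *m B.
Proof.
move=> hv; pose s l := \sum_k (v 0 k)%:P * B k l.
have hdiv l : ('X - lam%:P) %| s l.
  rewrite -root_factor_theorem; apply/rootP.
  have := congr1 (fun M : 'M[C]_(1, d) => M 0 l) hv; rewrite !mxE => <-.
  by rewrite /s horner_sum; apply: eq_bigr => k _; rewrite hornerCM !mxE horner_evalE.
exists (\matrix_(i, l) if i == i0 then s l %/ ('X - lam%:P) else B i l).
apply/matrixP => i l; rewrite !mxE (bigD1 i) //= !mxE eqxx big1 ?addr0; last first.
  by move=> k /negbTE hk; rewrite !mxE eq_sym hk mul0r.
case: eqP => [->|/eqP hne].
  by rewrite divpKC ?hdiv //; apply: eq_bigr => k _; rewrite !mxE eqxx.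
rewrite mul1r (bigD1 i) //= !mxE (negbTE hne) eqxx mul1r big1 ?addr0 //.
by move=> k /negbTE hk; rewrite !mxE (negbTE hne) eq_sym hk mul0r.
Qed.

Lemma det_root_step (B : pmx) lam : root (\det B) lam ->
  exists (B' : pmx) (c : C) (i0 : 'I_d), [/\ c != 0,
    ('X - lam%:P) * \det B' = c%:P * \det B &
    forall psi, pmx_ker B psi ->
      (forall j i, i != i0 -> pmx_act B' psi j i 0 = 0) /\
      (forall j, pmx_act B' psi (j + 1) i0 0 = lam * pmx_act B' psi j i0 0)].
Proof.
move=> hroot; have /det0P[v vn0 hv] : \det (map_mx (horner_eval lam) B) == 0.
  by rewrite det_map_mx.
have [i1 hi1] : exists i1, v 0 i1 != 0.
  apply/existsP; apply: contraNT vn0; rewrite negb_exists => /forallP h.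
  by apply/eqP/matrixP => a b; rewrite ord1 mxE; apply/eqP; move/negPn: (h b).
have [i0 hi0 hlast] := @arg_maxnP _ i1 (fun i => v 0 i != 0) val hi1.
have [B' hB'] := row_replace_factor i0 hv.
exists B', (v 0 i0), i0; split => //.
  by rewrite -(det_diagX i0 lam) -(det_row_replace hlast) -!det_mulmx hB'.
move=> psi hker; apply: pmx_ker_diagX => j.
rewrite -pmx_act_mul hB' pmx_act_mul /pmx_act (@pmx_actn_ext _ _ _ (fun=> 0)) //.
exact: pmx_actn0.
Qed.

Lemma det_root0_step (B : pmx) : root (\det B) 0 ->
  exists (B' : pmx) (c : C), [/\ c != 0, 'X * \det B' = c%:P * \det B &
    forall psi, pmx_ker B psi -> pmx_ker B' psi].
Proof.
move=> /det_root_step[B' [c [i0 [hc hdet hker]]]].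
exists B', c; split => //; first by rewrite -hdet subr0.
move=> psi /hker[hi hgeo]; apply: (geometric_pmx_ker hi hgeo).
by have := hgeo (-1); rewrite addNr mul0r.
Qed.

Lemma det_root_free_step (B : pmx) lam n (b : 'I_n.+1 -> sq) :
  root (\det B) lam -> seq_free b -> (forall i, pmx_ker B (b i)) ->
  exists (B' : pmx) (c : C) (b' : 'I_n -> sq), [/\ c != 0,
    ('X - lam%:P) * \det B' = c%:P * \det B, seq_free b' &
    forall k, pmx_ker B' (b' k)].
Proof.
move=> /det_root_step[B' [c [i0 [hc hdet hker]]]] hfree hb.
have hlin (x y : sq) c0 : pmx_act B' (fun j => x j - c0 *: y j) 0 i0 0 =
    pmx_act B' x 0 i0 0 - c0 * pmx_act B' y 0 i0 0.
  by rewrite /pmx_act pmx_actnB !mxE.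
have [b' [hfree' hb']] := seq_free_hyperplane hfree hb (@pmx_kerB B) hlin.
exists B', c, b'; split => // k; have [/hker[hi hgeo] h0] := hb' k.
exact: geometric_pmx_ker hi hgeo h0.
Qed.

(* Each nonzero root of [\det B] removes at most one dimension from the kernel, and the
   root [0] none, since a two-sided sequence with [x_(j+1) = 0 * x_j] vanishes. *)
Lemma pmx_ker_dim_le m (B : pmx) s (g : {poly C}) n (b : 'I_n -> sq) :
  (s + size g <= m)%N -> \det B = 'X^s * g -> g != 0 ->
  seq_free b -> (forall i, pmx_ker B (b i)) -> (n <= (size g).-1)%N.
Proof.
elim: m => [|m IH] in B s g n b *.
  by move=> + _ hg; rewrite leqn0 addn_eq0 size_poly_eq0 (negbTE hg) andbF.
case: n b => [//|n] b hm hdet hg hfree hb.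
case: s hm hdet => [|s] hm hdet; last first.
  have [|B' [c [hc hdet' hker]]] := det_root0_step (B := B).
    by rewrite hdet rootE hornerM hornerXn expr0n mul0r.
  have hdB' : \det B' = 'X^s * (c%:P * g).
    apply: (@mulfI _ 'X); first by rewrite polyX_eq0.
    by rewrite hdet' hdet exprS mulrCA !mulrA.
  rewrite -(size_Cmul g hc); apply: IH hdB' _ hfree _ => //.
  - by rewrite size_Cmul // -ltnS -addSn.
  - by rewrite mulf_neq0 ?polyC_eq0.
  - by move=> i; apply/hker/hb.
rewrite expr0 mul1r in hdet.
have [hg1|hg1] := leqP (size g) 1.
  have hgc : g = (g`_0)%:P by apply: size1_polyC.
  have hc0 : g`_0 != 0 by rewrite -polyC_eq0 -hgc.
  have hz i := pmx_ker_det_unit (etrans hdet hgc) hc0 (hb i).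
  have hsum j : \sum_i (fun=> 1 : C) i *: b i j = 0 by apply: big1 => i _; rewrite hz scaler0.
  by have /eqP := hfree _ hsum ord0; rewrite oner_eq0.
have [lam hlam] : exists lam, root g lam by apply/closed_rootP; rewrite neq_ltn hg1 orbT.
rewrite -hdet in hlam.
have [B' [c [b' [hc hdet' hfree' hb']]]] := det_root_free_step hlam hfree hb.
have hB'0 : \det B' != 0.
  apply/negP => /eqP hB0; move/negP: hg; apply; move: hdet'; rewrite hB0 mulr0 hdet => /esym/eqP.
  by rewrite mulf_eq0 polyC_eq0 (negbTE hc) => /= ->.
have hsize : size (\det B') = (size g).-1.
  have := congr1 (fun p : {poly C} => size p) hdet'.
  by rewrite size_Cmul // hdet size_mul ?polyXsubC_eq0 // size_XsubC => <-.
have hm' : (0 + size (\det B') <= m)%N by rewrite hsize; lia.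
by have := IH B' 0 (\det B') n b' hm' (esym (mul1r _)) hB'0 hfree' hb'; rewrite hsize; lia.
Qed.

Lemma pmx_act_det_ge (B : pmx) psi c :
  (forall i, c <= i -> pmx_act B psi i = 0) ->
  forall i, c <= i -> pmx_act ((\det B)%:M) psi i = 0.
Proof.
move=> h i hi; rewrite -mul_adj_mx pmx_act_mul [pmx_act (\adj B) _ _]/pmx_act /pmx_actn.
by rewrite big1 // => k _; rewrite h ?mulmx0 // (le_trans hi) // lerDl.
Qed.

(* The adjugate looks up to [N] steps to the right, which costs [N] indices. *)
Lemma pmx_act_det_le (B : pmx) psi c N :
  (forall i j, size (\adj B i j) <= N.+1)%N ->
  (forall i, i <= c -> pmx_act B psi i = 0) ->
  forall i, i <= c - N%:Z -> pmx_act ((\det B)%:M) psi i = 0.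
Proof.
move=> hN h i hi; rewrite -mul_adj_mx pmx_act_mul -(@pmx_actnE N.+1) //.
rewrite /pmx_actn big1 // => k _; rewrite h ?mulmx0 //.
have : k%:Z <= N%:Z by rewrite lez_nat -ltnS.
lia.
Qed.

Lemma recurrence_zero_ge (P : {poly C}) s (psi : sq) c K :
  P`_s != 0 -> (forall k, (k < s)%N -> P`_k = 0) ->
  (forall j, K <= j -> psi j = 0) ->
  (forall i, c <= i -> pmx_act P%:M psi i = 0) ->
  forall t, c + s%:Z <= t -> psi t = 0.
Proof.
move=> hs hlow hK hrec.
have hsP : (s < size P)%N by rewrite ltnNge; apply: contra hs => hle; rewrite nth_default.
suff key m t : c + s%:Z <= t -> K - m%:Z <= t -> psi t = 0.
  by move=> t ht; apply: (key `|K - t|%N t ht); lia.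
elim: m t => [|m IH] t ht htK; first by apply: hK; rewrite subr0 in htK.
have [ht1|ht1] := lerP (K - m%:Z) t; first exact: IH.
have := hrec (t - s%:Z); rewrite pmx_act_scalar (bigD1 (Ordinal hsP)) //= big1.
  by rewrite addr0 subrK => /(_ _)/eqP; rewrite scaler_eq0 (negbTE hs) => /(_ _)/eqP; apply; lia.
move=> k hk; have [hks|hks] := ltnP k s; first by rewrite hlow // scale0r.
have hks' : (s < k)%N by rewrite ltn_neqAle hks andbT; apply: contraNneq hk => e; apply/eqP/val_inj.
rewrite IH ?scaler0 //; lia.
Qed.

Lemma recurrence_zero_le (P : {poly C}) (psi : sq) c K :
  P != 0 ->
  (forall j, j <= K -> psi j = 0) ->
  (forall i, i <= c -> pmx_act P%:M psi i = 0) ->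
  forall t, t <= c + (size P).-1%:Z -> psi t = 0.
Proof.
move=> hP hK hrec.
have hsP : ((size P).-1 < size P)%N by rewrite prednK // lt0n size_poly_eq0.
have hl : P`_(size P).-1 != 0 by rewrite -lead_coefE lead_coef_eq0.
set D := (size P).-1 in hsP hl *.
suff key m t : t <= c + D%:Z -> t <= K + m%:Z -> psi t = 0.
  by move=> t ht; apply: (key `|t - K|%N t ht); lia.
elim: m t => [|m IH] t ht htK; first by apply: hK; rewrite addr0 in htK.
have [ht1|ht1] := lerP t (K + m%:Z); first exact: IH.
have := hrec (t - D%:Z); rewrite pmx_act_scalar (bigD1 (Ordinal hsP)) //= big1.
  by rewrite addr0 subrK => /(_ _)/eqP; rewrite scaler_eq0 (negbTE hl) => /(_ _)/eqP; apply; lia.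
move=> k hk; have hkD : (k < D)%N.
  rewrite ltn_neqAle -ltnS prednK ?lt0n ?size_poly_eq0 // ltn_ord andbT.
  by apply: contraNneq hk => e; apply/eqP/val_inj.
rewrite IH ?scaler0 //; lia.
Qed.

Lemma size_det_leq n (M : 'M[{poly C}]_n) N :
  (forall i j, size (M i j) <= N.+1)%N -> (size (\det M) <= n * N + 1)%N.
Proof.
move=> hM; apply: leq_trans (size_sum _ _ _) _; apply/bigmax_leqP => sg _.
rewrite size_Msign; have := size_poly_prod_leq xpredT (fun i => M i (sg i)).
have : (\sum_i size (M i (sg i)) <= n * N.+1)%N.
  by rewrite -[n in (_ <= n * _)%N]card_ord -sum_nat_const leq_sum.
move=> hsum /leq_trans; apply; rewrite leq_subLR card_ord addnC addn1 ltnS.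
by apply: leq_trans hsum _; rewrite mulnS addnC.
Qed.

Lemma size_adj_leq (M : pmx) N : (forall i j, size (M i j) <= N.+1)%N ->
  forall i j, (size (\adj M i j) <= d.-1 * N + 1)%N.
Proof.
move=> hM i j; rewrite mxE /cofactor size_Msign.
by apply: size_det_leq => a b; rewrite !mxE.
Qed.

Lemma poly_Xn_factor (P : {poly C}) : P != 0 ->
  exists s (g : {poly C}), P = 'X^s * g /\ g`_0 != 0.
Proof.
move=> hP; have hex : exists i, P`_i != 0.
  by exists (size P).-1; rewrite -lead_coefE lead_coef_eq0.
have [s hs hmin] := ex_minnP hex.
exists s, (drop_poly s P); split; last by rewrite coef_drop_poly add0n.
rewrite -{1}(poly_take_drop s P) mulrC [take_poly s P](_ : _ = 0) ?add0r //.
apply/polyP => i; rewrite coef_take_poly coef0; case: ltnP => // his.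
by apply/eqP; apply: contraTT his => /hmin; rewrite -leqNgt.
Qed.

End PolyMatrixAction.

Lemma tau_scale_bounds (p q k : int) : p <= q -> 1 <= k ->
  k * (q - p) + (p - pmin p) <= k * tau p q /\
  (qmax q - p) + (k - 1) * (q - p) <= k * tau p q.
Proof.
rewrite /tau /pmin /qmax /Num.min /Num.max /=.
by case: ltP => ?; case: ltP => ? hpq hk; split; nia.
Qed.

Lemma pmin_spec (p : int) : pmin p <= p /\ pmin p <= 0.
Proof. by rewrite /pmin /Num.min /=; case: ltP => h; lia. Qed.

Lemma qmax_spec (q : int) : q <= qmax q /\ 0 <= qmax q.
Proof. by rewrite /qmax /Num.max /=; case: ltP => h; lia. Qed.

Section IteratedShifts.
Variables (C : numClosedFieldType) (d : nat).
Local Notation sq := (seqZ C d).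

Lemma iter_projT L k (Psi : sq) j :
  iter k.+1 (fun Phi => proj (Some L) None (shiftT Phi)) Psi j =
  if L <= j then Psi (j + k.+1%:Z) else 0.
Proof.
elim: k j => [|k IH] j; first by rewrite /= /proj /shiftT /in_range andbT.
rewrite iterS {1}/proj /shiftT /in_range andbT IH.
case: (leP L j) => h //; rewrite ifT; last by apply: le_trans h _; rewrite lerDl.
by rewrite -addrA; congr (Psi (_ + _)); lia.
Qed.

Lemma iter_projTinv R k (Psi : sq) j :
  iter k.+1 (fun Phi => proj None (Some R) (shiftTinv Phi)) Psi j =
  if j <= R then Psi (j - k.+1%:Z) else 0.
Proof.
elim: k j => [|k IH] j; first by rewrite /= /proj /shiftTinv.
rewrite iterS {1}/proj {1}/shiftTinv {1}/in_range IH /=.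
case: (leP j R) => h //; rewrite ifT; last by apply: le_trans h; rewrite lerBlDr lerDl.
by rewrite -addrA; congr (Psi (_ + _)); lia.
Qed.

End IteratedShifts.

Section BBLKernels.
Variables (C : numClosedFieldType) (d : nat) (a : int -> 'M[C]_d) (p q : int).
Local Notation sq := (seqZ C d).

(* The polynomial matrix [w^-p A(w)] of the definition of [regular]. *)
Definition bbl_pmx : 'M[{poly C}]_d :=
  \matrix_(i, j) \poly_(k < `|q - p|%N.+1) (a (p + k%:Z) i j).

Lemma size_bbl_pmx i j : (size (bbl_pmx i j) <= `|q - p|%N.+1)%N.
Proof. by rewrite mxE; apply: size_poly. Qed.

Lemma bbl_pmx_act (psi : sq) j : bbl a p q psi j = pmx_act bbl_pmx psi (j + p).
Proof.
rewrite -(@pmx_actnE _ _ `|q - p|%N.+1); last by move=> *; apply: size_bbl_pmx.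
apply: eq_bigr => k _; rewrite addrA; congr (_ *m _).
by apply/matrixP => i l; rewrite !mxE coef_poly ltn_ord.
Qed.

Lemma size_det_bbl_pmx : (size (\det bbl_pmx) <= d * `|q - p| + 1)%N.
Proof. exact: size_det_leq size_bbl_pmx. Qed.

Lemma kerA_dim_le n s (g : {poly C}) :
  has_dim (kerA a p q) n -> \det bbl_pmx = 'X^s * g -> g != 0 -> (n <= (size g).-1)%N.
Proof.
move=> [b [hker hfree _]] hdet hg.
apply: (pmx_ker_dim_le (leqnn _) hdet hg hfree) => i j.
by have := hker i (j - p); rewrite bbl_pmx_act subrK.
Qed.

Lemma kerKminus_iff L Lbar (Psi : sq) : kerKminus a p q L Lbar Psi <->
  Fminus a p q L Psi /\ forall j, Lbar < j -> Psi j = 0.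
Proof.
have [hp _] := pmin_spec p; rewrite /kerKminus /Fminus /bulkM.
split => [[hinv hK] | [[[hinv hbulk] _] hsupp]].
  have hout j : (j < L) || (Lbar < j) -> Psi j = 0.
    by move=> hj; apply: hinv; rewrite /in_range negb_and -!ltNge.
  split; last by move=> j hj; apply: hout; rewrite hj orbT.
  split; last first.
    exists `|Lbar - L|%N.+1; split=> // j; rewrite iter_projT.
    by case: ifP => // hj; apply: hout; apply/orP; right; lia.
  split=> [j | j]; first by rewrite /in_range andbT -ltNge => hj; rewrite hout ?hj.
  rewrite /proj /in_range /= andbT; case: ifP => // hj.
  case: (leP j (Lbar - pmin p)) => hj2.
    by have := hK j; rewrite /Kminus /proj /in_range hj hj2.
  by rewrite /bbl big1 // => k _; rewrite hout ?mulmx0 //; apply/orP; right; lia.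
split=> [j | j].
  rewrite /in_range negb_and -!ltNge => /orP[hj|]; last exact: hsupp.
  by apply: hinv; rewrite /in_range andbT -ltNge.
rewrite /Kminus /proj /in_range; case: ifP => // /andP[hj _].
by have := hbulk j; rewrite /proj /in_range /= andbT hj.
Qed.

Lemma kerKplus_iff Rbar R (Psi : sq) : p <= q -> kerKplus a p q Rbar R Psi <->
  Fplus a p q R Psi /\ forall j, j < Rbar -> Psi j = 0.
Proof.
move=> hpq; have [hq _] := qmax_spec q.
have habs : `|q - p|%N%:Z = q - p by rewrite gez0_abs ?subr_ge0.
rewrite /kerKplus /Fplus /bulkM; split => [[hinv hK] | [[[hinv hbulk] _] hsupp]].
  have hout j : (j < Rbar) || (R < j) -> Psi j = 0.
    by move=> hj; apply: hinv; rewrite /in_range negb_and -!ltNge.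
  split; last by move=> j hj; apply: hout; rewrite hj.
  split; last first.
    exists `|R - Rbar|%N.+1; split=> // j; rewrite iter_projTinv.
    by case: ifP => // hj; apply: hout; apply/orP; left; lia.
  split=> [j | j]; first by rewrite /in_range -ltNge => hj; rewrite hout ?hj ?orbT.
  rewrite /proj /in_range /=; case: ifP => // hj.
  case: (leP (Rbar - qmax q) j) => hj2.
    by have := hK j; rewrite /Kplus /proj /in_range hj hj2.
  rewrite /bbl big1 // => k _; rewrite hout ?mulmx0 //; apply/orP; left.
  by have := ltn_ord k; rewrite ltnS -lez_nat habs; lia.
split=> [j | j].
  rewrite /in_range negb_and -!ltNge => /orP[|hj]; first exact: hsupp.
  by apply: hinv; rewrite /in_range -ltNge.
rewrite /Kplus /proj /in_range; case: ifP => // /andP[_ hj].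
by have := hbulk j; rewrite /proj /in_range /= hj.
Qed.

Lemma Fminus_support L s (g : {poly C}) (Psi : sq) :
  \det bbl_pmx = 'X^s * g -> g`_0 != 0 -> Fminus a p q L Psi ->
  forall j, L - pmin p + p + s%:Z <= j -> Psi j = 0.
Proof.
move=> hdet hg0 [[_ hbulk] [[|k] [// _ hnil]]].
have hB i : L - pmin p + p <= i -> pmx_act bbl_pmx Psi i = 0.
  move=> hi; rewrite -(subrK p i) -bbl_pmx_act; have := hbulk (i - p).
  by rewrite /proj /in_range /= andbT ifT //; lia.
have hfin j : L + k.+1%:Z <= j -> Psi j = 0.
  by move=> hj; have := hnil (j - k.+1%:Z); rewrite iter_projT subrK ifT //; lia.
apply: (recurrence_zero_ge _ _ hfin (pmx_act_det_ge hB)); rewrite hdet.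
  by rewrite coefXnM ltnn subnn.
by move=> i hi; rewrite coefXnM hi.
Qed.

Lemma Fplus_support R (Psi : sq) : \det bbl_pmx != 0 -> Fplus a p q R Psi ->
  forall j, j <= R - qmax q + p - (d.-1 * `|q - p|)%N%:Z + (size (\det bbl_pmx)).-1%:Z ->
  Psi j = 0.
Proof.
move=> hdet [[_ hbulk] [[|k] [// _ hnil]]].
have hB i : i <= R - qmax q + p -> pmx_act bbl_pmx Psi i = 0.
  move=> hi; rewrite -(subrK p i) -bbl_pmx_act; have := hbulk (i - p).
  by rewrite /proj /in_range /= ifT //; lia.
have hfin j : j <= R - k.+1%:Z -> Psi j = 0.
  by move=> hj; have := hnil (j + k.+1%:Z); rewrite iter_projTinv addrK ifT //; lia.
have hadj i j : (size (\adj bbl_pmx i j) <= (d.-1 * `|q - p|).+1)%N.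
  by rewrite -addn1; exact: (size_adj_leq size_bbl_pmx).
exact: recurrence_zero_le hdet hfin (pmx_act_det_le hadj hB).
Qed.

End BBLKernels.

Theorem mainTheorem12 (C : numClosedFieldType) (d : nat) (hd : (0 < d)%N)
  (a : int -> 'M[C]_d) (p q : int)
  (hband : bandwidth a p q) (hreg : regular a p q)
  (n : nat) (hdim : has_dim (kerA a p q) n)
  (L R : int) (hLR : L <= R)
  (hN : R - L + 1 >= tau p q + 2 * (d%:Z * tau p q - n%:Z)) :
  let sigma := d%:Z * tau p q - n%:Z in
  let Lbar := L + sigma - 1 in
  let Rbar := R - sigma + 1 in
  (forall Psi : int -> 'cV[C]_d, Fminus a p q L Psi <-> kerKminus a p q L Lbar Psi) /\
  (forall Psi : int -> 'cV[C]_d, Fplus a p q R Psi <-> kerKplus a p q Rbar R Psi).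
Proof.
move=> sigma Lbar Rbar; have hpq : p <= q by case: hband.
have hdet0 : \det (bbl_pmx a p q) != 0 := hreg.
have [s [g [hdet hg0]]] := poly_Xn_factor hdet0.
have hg : g != 0 by apply: contraNneq hg0 => ->; rewrite coef0.
have hn := kerA_dim_le hdim hdet hg.
have hsize : size (\det (bbl_pmx a p q)) = (s + size g)%N.
  by rewrite hdet size_mul ?expf_neq0 ?polyX_eq0 // size_polyXn addSn.
have habs : `|q - p|%N%:Z = q - p by rewrite gez0_abs ?subr_ge0.
have hdeg : s%:Z + (size g)%:Z <= d%:Z * (q - p) + 1.
  by rewrite -habs -PoszD -hsize; apply: size_det_bbl_pmx.
have hgs : (0 < size g)%N by rewrite lt0n size_poly_eq0.
have hn' : n%:Z <= (size g)%:Z - 1 by lia.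
have hd1 : 1 <= d%:Z by rewrite lez_nat.
have [htauL htauR] := tau_scale_bounds hpq hd1.
split=> Psi; [rewrite kerKminus_iff | rewrite kerKplus_iff //].
  split=> [hF | [] //]; split=> // j hj; apply: (Fminus_support hdet hg0 hF).
  rewrite /Lbar /sigma in hj; lia.
split=> [hF | [] //]; split=> // j hj; apply: (Fplus_support hdet0 hF).
have hadj : (d.-1 * `|q - p|)%N%:Z = (d%:Z - 1) * (q - p).
  by rewrite PoszM habs; congr (_ * _); lia.
by rewrite hsize hadj; rewrite /Rbar /sigma in hj; lia.
Qed.
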